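(* Consider the setting described in the context, and assume $\operatorname{supp}(f_{(0,0)})=\mathcal{U}$. Fix a radius $r>0$. Then there exists a constant $\delta_r>0$, depending on $\operatorname{diam}(\mathcal{U}),\sigma,d,f_{(0,0)}$ (and not on $n$ or $k$), such that for all $n\in\mathbb{N}_0$ and all $k\in\{0,\dots,\bar k\}$, $$f_{(n,k)}\big(B_r(u^*_{(n)})\big)\ge\delta_r .$$
   Context: Setting: $d,m\ge1$; $\mathcal{X}\subseteq\mathbb{R}^m$; $u_{\min}<u_{\max}$ in $\mathbb{R}^d$ (componentwise) and $\mathcal{U}=\{u\in\mathbb{R}^d:u_{\min}\le u\le u_{\max}\}$; $\operatorname{proj}_{\mathcal{U}}(v)=\operatorname{argmin}_{u\in\mathcal{U}}|u-v|$. The transition map is $\Phi(x,u)=\Phi_s(x)+F_cu$ with $\Phi_s:\mathcal{X}\to\mathcal{X}$, $F_c\in\mathbb{R}^{m\times d}$, $\nu>0$, and $A=F_c^\top F_c+\nu I_d$ of full rank. A reference $x^{\mathrm{ref}}(t_n)\in\mathcal{X}$ is given at times $t_n=n\Delta t$. For a state $x_{(n)}\in\mathcal{X}$, $L_n(u)=|\Phi_s(x_{(n)})+F_cu-x^{\mathrm{ref}}(t_{n+1})|^2+\nu|u|^2$ and $u^*_{(n)}$ is its unique minimizer over $\mathcal{U}$. For a probability measure $f$ on $\mathbb{R}^d$ and $\alpha>0$, $m^\alpha_{L_n}[f]=\int u e^{-\alpha L_n(u)}f(du)/\int e^{-\alpha L_n(u)}f(du)$. Parameters: $\alpha,\lambda,\sigma,\tau>0$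 with $\lambda\tau\in(0,1)$, $\bar k\in\mathbb{N}$. Mean-field MPC–CBO dynamics: given $x_{(0)}\in\mathcal{X}$ and a probability measure $f_{(0,0)}$ on $\mathbb{R}^d$, for each $n\in\mathbb{N}_0$ and $k=0,\dots,\bar k-1$ let $f_{(n,k+1)}$ be the law of $\operatorname{proj}_{\mathcal{U}}\big(\bar U+\lambda\tau(m^\alpha_{L_n}[f_{(n,k)}]-\bar U)+\sigma\sqrt\tau\,\theta\big)$, where $\bar U\sim f_{(n,k)}$ and $\theta\sim\mathcal{N}(0,I_d)$ are independent; then $u_{(n)}=m^\alpha_{L_n}[f_{(n,\bar k)}]$, $x_{(n+1)}=\Phi_s(x_{(n)})+F_cu_{(n)}$, and $f_{(n+1,0)}=f_{(n,\bar k)}$. $B_r(v)$ denotes the Euclidean ball of radius $r$ about $v$. *)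

From HB Require Import structures.
From mathcomp Require Import all_boot all_order all_algebra.
From mathcomp Require Import all_classical all_reals all_analysis.
Set Implicit Arguments. Unset Strict Implicit. Unset Printing Implicit Defensive.
Import Order.TTheory GRing.Theory Num.Theory.
Local Open Scope classical_set_scope.
Local Open Scope ring_scope.

Section Defs.
Context {R : realType}.

(* vectors of R^n are represented as n.-tuple R (which carries the product
   Borel sigma-algebra in MathComp-Analysis) *)
Definition vadd n (u v : n.-tuple R) : n.-tuple R :=
  [tuple tnth u i + tnth v i | i < n].
Definition vscale n (a : R) (u : n.-tuple R) : n.-tuple R :=
  [tuple a * tnth u i | i < n].
Definition vsub n (u v : n.-tuple R) : n.-tuple R := vadd u (vscale (-1) v).
Definition vzero n : n.-tuple R := [tuple 0 | i < n].

Definition vnorm2 n (u : n.-tuple R) : R := \sum_(i < n) tnth u i ^+ 2.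
Definition vnorm n (u : n.-tuple R) : R := Num.sqrt (vnorm2 u).

Definition mxv m d (F : 'M[R]_(m, d)) (u : d.-tuple R) : m.-tuple R :=
  [tuple \sum_(j < d) F i j * tnth u j | i < m].

Definition box d (umin umax : d.-tuple R) : set (d.-tuple R) :=
  [set u | forall i, tnth umin i <= tnth u i <= tnth umax i].

Definition eball n (v : n.-tuple R) (r : R) : set (n.-tuple R) :=
  [set u | vnorm (vsub u v) < r].

Definition argmin_on n (S : set (n.-tuple R)) (L : n.-tuple R -> R) : n.-tuple R :=
  xget (vzero n) [set u | S u /\ forall w, S w -> L u <= L w].

Definition projU d (U : set (d.-tuple R)) (v : d.-tuple R) : d.-tuple R :=
  argmin_on U (fun u => vnorm (vsub u v)).

Definition supp n (mu : set (n.-tuple R) -> \bar R) : set (n.-tuple R) :=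
  [set u | forall e : R, 0 < e -> (0 < mu (eball u e))%E].

Definition Lcost m d (Phis : m.-tuple R -> m.-tuple R) (Fc : 'M[R]_(m, d))
  (nu : R) (x xr : m.-tuple R) (u : d.-tuple R) : R :=
  vnorm2 (vsub (vadd (Phis x) (mxv Fc u)) xr) + nu * vnorm2 u.

Definition consensus d (L : d.-tuple R -> R) (alpha : R)
  (f : set (d.-tuple R) -> \bar R) : d.-tuple R :=
  [tuple fine (\int[f]_u ((tnth u i * expR (- alpha * L u))%:E)) /
         fine (\int[f]_u (expR (- alpha * L u))%:E) | i < d].

Definition cbo_step d (U : set (d.-tuple R)) (lambda tau sigma : R)
  (mc u theta : d.-tuple R) : d.-tuple R :=
  projU U (vadd (vadd u (vscale (lambda * tau) (vsub mc u)))
                (vscale (sigma * Num.sqrt tau) theta)).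

(* G is the standard Gaussian N(0, I_d) on R^d: independent N(0,1) coordinates *)
Definition std_gaussian d (G : set (d.-tuple R) -> \bar R) : Prop :=
  forall A : 'I_d -> set R, (forall i, measurable (A i)) ->
    G [set t | forall i, A i (tnth t i)] = (\prod_(i < d) normal_prob 0 1 (A i))%E.

End Defs.

(* Every f_(n,k) is concentrated on the box U: f_(0,0) because a measure vanishes
   off its support (the complement is covered by countably many null rational
   balls), the later ones because a CBO step ends with the projection onto U.
   Hence every consensus point, and every drifted point u + lambda tau (m - u)
   with u in U, lies in the cube [-B, B]^d, B = sum_i (|umin_i| + |umax_i|).
   The projection onto a box moves no coordinate away from a point of the box,
   so a step lands in B_r(u*_(n)) as soon as the Gaussian noise falls into a cube
   of fixed size around a centre bounded by 2B / (sigma sqrt tau); this happens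
   with probability at least some c0 > 0 that depends on neither n, k nor the
   dynamics.  At k = 0 the measure is either such a step image or f_(0,0),
   which gives every ball B_r(u), u in U, mass at least delta0 > 0 by
   compactness of U (a finite r/2-net).  Finally u*_(n) lies in U, as the
   minimiser of a continuous function on a compact box. *)

From HB Require Import structures.
From mathcomp Require Import all_boot all_order all_algebra.
From mathcomp Require Import all_classical all_reals all_analysis.
From mathcomp Require Import measurable_realfun ring lra.
Set Implicit Arguments. Unset Strict Implicit. Unset Printing Implicit Defensive.
Import Order.TTheory GRing.Theory Num.Theory.
Local Open Scope classical_set_scope.
Local Open Scope ring_scope.
Import numFieldTopology.Exports numFieldNormedType.Exports.

Section EuclideanTuples.
Context {R : realType}.
Implicit Types (n : nat) (r e : R).

Lemma tnth_vadd n (u v : n.-tuple R) i : tnth (vadd u v) i = tnth u i + tnth v i.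
Proof. by rewrite tnth_mktuple. Qed.

Lemma tnth_vscale n (a : R) (u : n.-tuple R) i : tnth (vscale a u) i = a * tnth u i.
Proof. by rewrite tnth_mktuple. Qed.

Lemma tnth_vsub n (u v : n.-tuple R) i : tnth (vsub u v) i = tnth u i - tnth v i.
Proof. by rewrite tnth_vadd tnth_vscale mulN1r. Qed.

Lemma vnorm2_ge0 n (u : n.-tuple R) : 0 <= vnorm2 u.
Proof. by apply: sumr_ge0 => i _; exact: sqr_ge0. Qed.

Lemma vnorm2_subC n (u v : n.-tuple R) : vnorm2 (vsub u v) = vnorm2 (vsub v u).
Proof. by apply: eq_bigr => i _; rewrite !tnth_vsub -sqrrN opprB. Qed.

Lemma vnorm2_sub_le n (t q p : n.-tuple R) :
  vnorm2 (vsub t p) <= 2 * vnorm2 (vsub t q) + 2 * vnorm2 (vsub q p).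
Proof.
rewrite /vnorm2 !mulr_sumr -big_split /=; apply: ler_sum => i _.
rewrite !tnth_vsub; have := sqr_ge0 (tnth t i - 2 * tnth q i + tnth p i); nra.
Qed.

Lemma vnorm2_le_coord n (u : n.-tuple R) c :
  (forall i, `|tnth u i| <= c) -> vnorm2 u <= n%:R * c ^+ 2.
Proof.
move=> uc; have -> : n%:R * c ^+ 2 = \sum_(i < n) c ^+ 2.
  by rewrite sumr_const card_ord mulr_natl.
apply: ler_sum => i _; have := uc i; have := normr_ge0 (tnth u i).
by rewrite -real_normK ?num_real//; nra.
Qed.

Lemma vnorm2_lt_coord n e : 0 < e ->
  exists2 c, 0 < c & forall u : n.-tuple R,
    (forall i, `|tnth u i| <= c) -> vnorm2 u < e ^+ 2.
Proof.
move=> e0; have n1 : 0 < n%:R + 1 :> R by rewrite ltr_wpDl ?ler0n.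
exists (e / (n%:R + 1)); first by rewrite divr_gt0.
move=> u /vnorm2_le_coord /le_lt_trans; apply.
rewrite expr_div_n mulrA ltr_pdivrMr ?exprn_gt0// mulrC ltr_pM2l ?exprn_gt0//.
by have := ler0n R n; nra.
Qed.

Lemma eballE n (v t : n.-tuple R) r : 0 < r ->
  eball v r t <-> vnorm2 (vsub t v) < r ^+ 2.
Proof.
by move=> r0; rewrite /eball /vnorm /= -{1}(ger0_norm (ltW r0)) -sqrtr_sqr ltr_sqrt ?exprn_gt0.
Qed.

Lemma eball_sub n (p q : n.-tuple R) e r : 0 < r -> 0 < e ->
  2 * r ^+ 2 + 2 * vnorm2 (vsub q p) <= e ^+ 2 -> eball q r `<=` eball p e.
Proof.
move=> r0 e0 qp t /(eballE _ _ r0) tq; apply/(eballE _ _ e0).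
by apply: le_lt_trans (vnorm2_sub_le t q p) _; apply: lt_le_trans qp; lra.
Qed.

Definition clamp (a b x : R) := Num.max a (Num.min b x).

Definition clamp_tuple n (a b v : n.-tuple R) : n.-tuple R :=
  [tuple clamp (tnth a i) (tnth b i) (tnth v i) | i < n].

Lemma clamp_itv a b x : a <= b -> a <= clamp a b x <= b.
Proof. by move=> ab; rewrite /clamp le_max lexx ge_max ab ge_min lexx. Qed.

Lemma clamp_sqr_le a b x w : a <= w <= b ->
  (clamp a b x - x) ^+ 2 + (w - clamp a b x) ^+ 2 <= (w - x) ^+ 2.
Proof.
move=> /andP[aw wb]; rewrite /clamp.
have [xb|bx] := leP x b.
  have [ax|xa] := leP a x; last by nra.
  by rewrite subrr expr0n add0r.
have -> : Num.max a b = b by apply/max_idPr/(le_trans aw).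
nra.
Qed.

Lemma clamp_dist_le a b x w : a <= w <= b -> `|clamp a b x - w| <= `|x - w|.
Proof.
move=> /(clamp_sqr_le x) h; rewrite -ler_sqr ?nnegrE// !real_normK ?num_real//.
by rewrite -sqrrN opprB -(sqrrN (x - w)) opprB; have := sqr_ge0 (clamp a b x - x); lra.
Qed.

Lemma argmin_onE n (S : set (n.-tuple R)) (L : n.-tuple R -> R) u :
  S u -> (forall w, S w -> L u <= L w) -> (forall w, S w -> L w <= L u -> w = u) ->
  argmin_on S L = u.
Proof.
move=> Su umin uniq; apply: xget_unique; first by split.
by move=> w [Sw wmin]; exact: uniq _ Sw (wmin _ Su).
Qed.

Lemma projU_box n (a b v : n.-tuple R) : (forall i, tnth a i <= tnth b i) ->
  projU (box a b) v = clamp_tuple a b v.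
Proof.
move=> ab; set c := clamp_tuple a b v.
have tnth_c i : tnth c i = clamp (tnth a i) (tnth b i) (tnth v i) by rewrite tnth_mktuple.
have pyth w : box a b w -> vnorm2 (vsub c v) + vnorm2 (vsub w c) <= vnorm2 (vsub w v).
  move=> wab; rewrite -big_split; apply: ler_sum => i _.
  by rewrite !tnth_vsub tnth_c clamp_sqr_le.
apply: argmin_onE => [i|w wab|w wab].
- by rewrite tnth_c clamp_itv.
- rewrite /vnorm ler_sqrt ?vnorm2_ge0//; apply: le_trans (pyth w wab).
  by rewrite lerDl vnorm2_ge0.
- rewrite /vnorm ler_sqrt ?vnorm2_ge0// => wc.
  have wc0 : vnorm2 (vsub w c) = 0.
    by apply/eqP; rewrite eq_le vnorm2_ge0 andbT; have := pyth w wab; lra.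
  apply: eq_from_tnth => i; apply/eqP; rewrite -subr_eq0 -sqrf_eq0 -tnth_vsub.
  by apply/eqP/(psumr_eq0P _ wc0) => // j _; exact: sqr_ge0.
Qed.

Lemma projU_box_dist_le n (a b v w : n.-tuple R) : box a b w ->
  forall i, `|tnth (projU (box a b) v) i - tnth w i| <= `|tnth v i - tnth w i|.
Proof.
move=> wab i; have ab j : tnth a j <= tnth b j by case/andP: (wab j); exact: le_trans.
by rewrite projU_box// tnth_mktuple clamp_dist_le.
Qed.

Definition box_radius n (a b : n.-tuple R) := \sum_(i < n) (`|tnth a i| + `|tnth b i|).

Lemma box_coord_le n (a b u : n.-tuple R) i : box a b u -> `|tnth u i| <= box_radius a b.
Proof.
move=> /(_ i) /andP[au ub]; apply: (@le_trans _ _ (`|tnth a i| + `|tnth b i|)).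
  have := ler_norm (tnth b i); have := ler_norm (- tnth a i); rewrite normrN ler_norml.
  by have := normr_ge0 (tnth a i); have := normr_ge0 (tnth b i); lra.
rewrite /box_radius (bigD1 i)//= lerDl; apply: sumr_ge0 => j _; exact: addr_ge0.
Qed.

End EuclideanTuples.

Section Regularity.
Context {R : realType}.

Lemma LcostE m d (Phis : m.-tuple R -> m.-tuple R) (Fc : 'M[R]_(m, d)) nu x xr u :
  Lcost Phis Fc nu x xr u =
  \sum_(i < m) (tnth (Phis x) i + \sum_(j < d) Fc i j * tnth u j - tnth xr i) ^+ 2
  + nu * \sum_(i < d) tnth u i ^+ 2.
Proof.
by congr (_ + _); apply: eq_bigr => i _; rewrite tnth_vsub tnth_vadd tnth_mktuple.
Qed.

Lemma measurable_sum_ord (dT : measure_display) (T : measurableType dT) k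
  (h : 'I_k -> T -> R) : (forall i, measurable_fun setT (h i)) ->
  measurable_fun setT (fun t => \sum_(i < k) h i t).
Proof.
move=> mh; under eq_fun do rewrite -big_enum /=; exact: measurable_sum.
Qed.

Lemma measurable_vnorm2_sub n (v : n.-tuple R) :
  measurable_fun setT (fun t : n.-tuple R => vnorm2 (vsub t v)).
Proof.
have -> : (fun t : n.-tuple R => vnorm2 (vsub t v)) =
    (fun t => \sum_(i < n) (tnth t i - tnth v i) ^+ 2).
  by apply: funext => t; apply: eq_bigr => i _; rewrite tnth_vsub.
apply: measurable_sum_ord => i; apply: measurable_funX.
by apply: measurable_funB => //; exact: measurable_tnth.
Qed.

Lemma measurable_Lcost m d (Phis : m.-tuple R -> m.-tuple R) (Fc : 'M[R]_(m, d))
  nu x xr : measurable_fun setT (Lcost Phis Fc nu x xr).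
Proof.
rewrite (funext (LcostE Phis Fc nu x xr)).
have mcoord i : measurable_fun setT (fun t : d.-tuple R => tnth t i) by exact: measurable_tnth.
apply: measurable_funD.
  apply: measurable_sum_ord => i; apply: measurable_funX.
  apply: measurable_funB => //; apply: measurable_funD => //.
  by apply: measurable_sum_ord => j; apply: measurable_funM.
apply: measurable_funM => //.
by apply: measurable_sum_ord => i; exact: measurable_funX.
Qed.

Lemma measurable_eball n (v : n.-tuple R) r : 0 < r -> measurable (eball v r).
Proof.
move=> r0; have -> : eball v r = (fun t => vnorm2 (vsub t v)) @^-1` `]-oo, r ^+ 2[.
  by apply/seteqP; split => t; rewrite /= in_itv /= => /eballE-/(_ r0).
by rewrite -[_ @^-1` _]setTI; exact: measurable_vnorm2_sub.
Qed.

Lemma measurable_coord_set n (A : 'I_n -> set R) : (forall i, measurable (A i)) ->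
  measurable [set t : n.-tuple R | forall i, A i (tnth t i)].
Proof.
move=> mA; have -> : [set t : n.-tuple R | forall i, A i (tnth t i)] =
    \bigcap_(i in [set: 'I_n]) ((fun t => tnth t i) @^-1` A i).
  by apply/seteqP; split => t /= tA i => [_|]; exact: tA.
apply: fin_bigcap_measurable => // i _.
by rewrite -[_ @^-1` _]setTI; exact: measurable_tnth.
Qed.

Lemma measurable_box n (a b : n.-tuple R) : measurable (box a b).
Proof.
have -> : box a b = [set t | forall i, `[tnth a i, tnth b i]%classic (tnth t i)].
  by apply/seteqP; split => t /= tab i; move: (tab i); rewrite /= in_itv.
exact: (measurable_coord_set (fun i => measurable_itv `[tnth a i, tnth b i])).
Qed.

Definition row_tuple n (v : 'rV[R]_n) : n.-tuple R := [tuple v ord0 i | i < n].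

Lemma continuous_sum_ord (T : topologicalType) k (h : 'I_k -> T -> R) :
  (forall i, continuous (h i)) -> continuous (fun t => \sum_(i < k) h i t).
Proof.
move=> ch; have -> : (fun t => \sum_(i < k) h i t) =
    (fun t => \sum_(i <- enum 'I_k) h i t) by apply: funext => t; rewrite big_enum.
elim: (enum 'I_k) => [|i s IH].
  by under eq_fun do rewrite big_nil; exact: cst_continuous.
by under eq_fun do rewrite big_cons; move=> t; exact: (continuousD (ch i t) (IH t)).
Qed.

Lemma continuous_Lcost m d (Phis : m.-tuple R -> m.-tuple R) (Fc : 'M[R]_(m, d))
  nu x xr : continuous (Lcost Phis Fc nu x xr \o @row_tuple d).
Proof.
have ccoord i : continuous (fun v : 'rV[R]_d => tnth (row_tuple v) i).
  by under eq_fun do rewrite tnth_mktuple; exact: coord_continuous.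
rewrite /comp (funext (LcostE Phis Fc nu x xr)).
have csqr (g : 'rV[R]_d -> R) : continuous g -> continuous (fun v => g v ^+ 2).
  by move=> cg; under eq_fun do rewrite expr2; move=> v; exact: (continuousM (cg v) (cg v)).
have cst_c (c : R) : continuous (fun _ : 'rV[R]_d => c) by exact: cst_continuous.
have cres i : continuous (fun v =>
    tnth (Phis x) i + \sum_(j < d) Fc i j * tnth (row_tuple v) j - tnth xr i).
  move=> v; apply: (continuousD _ (cst_c _ v)); apply: (continuousD (cst_c _ v)).
  by apply: continuous_sum_ord => j w; exact: (continuousM (cst_c _ w) (ccoord j w)).
have cres2 := continuous_sum_ord (fun i => csqr _ (cres i)).
have cnorm2 := continuous_sum_ord (fun i => csqr _ (ccoord i)).
by move=> v; exact: (continuousD (cres2 v) (continuousM (cst_c _ v) (cnorm2 v))).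
Qed.

Lemma argmin_on_box n (a b : n.-tuple R) (L : n.-tuple R -> R) :
  (forall i, tnth a i <= tnth b i) -> continuous (L \o @row_tuple n) ->
  box a b (argmin_on (box a b) L).
Proof.
move=> ab cL.
pose A := [set v : 'rV[R]_n | forall i, `[tnth a i, tnth b i]%classic (v ord0 i)].
have cA : compact A.
  by apply: (@rV_compact _ _ (fun i => `[tnth a i, tnth b i]%classic)) => i; exact: segment_compact.
have rowA w : box a b w -> A (\row_i tnth w i).
  by move=> wab i; rewrite /= mxE in_itv; exact: wab.
have A0 : A !=set0 by exists (\row_i tnth a i); apply: rowA => i; rewrite lexx ab.
have [c /[1!inE] Ac cmin] := compact_EVT_min A0 cA (continuous_subspaceT cL).
suff [] : [set u | box a b u /\ forall w, box a b w -> L u <= L w]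
  (argmin_on (box a b) L) by [].
apply: xgetPex; exists (row_tuple c); split.
  by move=> i; rewrite tnth_mktuple; move: (Ac i); rewrite /= in_itv.
move=> w /rowA wA; have -> : w = row_tuple (\row_i tnth w i).
  by apply: eq_from_tnth => i; rewrite tnth_mktuple mxE.
by apply: cmin; rewrite inE.
Qed.

End Regularity.

Section Integration.
Context {R : realType}.
Local Open Scope ereal_scope.

(* The integral of a nonnegative function is a supremum over simple minorants,
   so monotonicity needs no measurability (which is not available for the
   integrands built from [cbo_step]). *)
Lemma ge0_le_integral_nonmeas dT (T : measurableType dT) (mu : measure T R) D
    (f g : T -> \bar R) :
  (forall x, D x -> 0 <= f x) -> (forall x, D x -> f x <= g x) ->
  \int[mu]_(x in D) f x <= \int[mu]_(x in D) g x.
Proof.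
move=> f0 fg; have g0 x : D x -> 0 <= g x by move=> Dx; exact: le_trans (f0 _ Dx) (fg _ Dx).
rewrite !ge0_integralE//; apply: ereal_sup_le => _ [h /= hf <-]; exists h => //= x.
apply: le_trans (hf x) _; rewrite /patch; case: ifP => // /set_mem; exact: fg.
Qed.

Lemma integral_ge_full dT (T : measurableType dT) (P : probability T R) (U : set T)
    (h : T -> \bar R) (c : R) :
  measurable U -> P U = 1 -> (0 <= c)%R -> (forall x, 0 <= h x) ->
  (forall x, U x -> c%:E <= h x) -> c%:E <= \int[P]_x h x.
Proof.
move=> mU PU c0 h0 hU.
have <- : \int[P]_x (c%:E * (\1_U x)%:E) = c%:E.
  rewrite ge0_integralZl_EFin//; last exact/measurable_EFinP/measurable_indic.
  have PU' : (P : measure T R) U = 1 := PU.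
  by rewrite integral_indic// setIT PU' mule1.
apply: ge0_le_integral_nonmeas => x _; first by rewrite -EFinM lee_fin mulr_ge0.
by rewrite indicE; case: (boolP (x \in U)) => [/set_mem/hU|_]; rewrite ?mule1 ?mule0.
Qed.

Lemma lee_expr_prod n (F : 'I_n -> \bar R) (b : R) : (0 <= b)%R ->
  (forall i, b%:E <= F i) -> (b ^+ n)%:E <= \prod_(i < n) F i.
Proof.
move=> b0; elim: n F => [|n IH] F bF; first by rewrite big_ord0 expr0.
rewrite big_ord_recr exprSr EFinM lee_pmul ?lee_fin ?exprn_ge0//.
exact: (IH (fun i => F (widen_ord (leqnSn n) i))).
Qed.

Lemma normal_prob_itv_lb (M e : R) : (0 <= M)%R -> (0 < e)%R ->
  exists2 beta : R, (0 < beta)%R & forall a : R, (`|a| <= M)%R ->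
    beta%:E <= normal_prob 0 1 `](a - e)%R, (a + e)%R[%classic.
Proof.
move=> M0 e0; pose p0 := (normal_peak (1 : R) * expR (- (M + e) ^+ 2 / 2))%R.
have p0_gt0 : (0 < p0)%R by rewrite mulr_gt0 ?expR_gt0 ?normal_peak_gt0 ?oner_neq0.
exists (p0 * (e *+ 2))%R => [|a aM]; first by rewrite mulr_gt0// mulrn_wgt0.
have ae : (a - e < a + e)%R by rewrite ltrD2l gtrN.
apply: (@le_trans _ _ (\int[lebesgue_measure]_(x in `](a - e)%R, (a + e)%R[%classic)
    (cst p0%:E x))).
  rewrite integral_cst//= lebesgue_measure_itv /= lte_fin ae -EFinB -EFinM lee_fin.
  by apply: ler_wpM2l; [exact: ltW | rewrite mulr2n; lra].
apply: ge0_le_integral_nonmeas => x; first by rewrite lee_fin ltW.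
rewrite /= in_itv /= lee_fin normal_pdfE ?oner_neq0// => /andP[ax xa].
rewrite ler_wpM2l ?normal_peak_ge0// /normal_fun ler_expR expr1n subr0.
move: aM; rewrite ler_norml => /andP[Ma aM].
suff : (x ^+ 2 <= (M + e) ^+ 2)%R by lra.
by rewrite -ler_sqrt ?sqr_ge0// !sqrtr_sqr ler_norml ger0_norm; [apply/andP; split; lra | lra].
Qed.

(* The bound also covers the junk value [0] that [consensus] takes when the
   normalising integral vanishes. *)
Lemma consensus_coord_le d (U : set (d.-tuple R)) (f : probability (d.-tuple R) R)
    (L : d.-tuple R -> R) (alpha B : R) :
  measurable U -> f U = 1 -> measurable_fun setT L ->
  (forall u, U u -> forall i, (`|tnth u i| <= B)%R) ->
  forall i, (`|tnth (consensus L alpha f) i| <= B)%R.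
Proof.
move=> mU fU mL UB i; rewrite tnth_mktuple.
have /set0P[u Uu] : U != set0.
  by apply/eqP => U0; move: fU; rewrite U0 measure0 => /esym/eqP; rewrite onee_eq0.
have B0 : (0 <= B)%R := le_trans (normr_ge0 _) (UB u Uu i).
have fUc : f (~` U) = 0 by rewrite probability_setC// fU subee.
set w := fun u => expR (- alpha * L u).
have mw : measurable_fun setT w.
  by apply: measurableT_comp => //; exact: measurable_funM.
have mwi : measurable_fun setT (fun u : d.-tuple R => tnth u i * w u)%R.
  by apply: measurable_funM => //; exact: measurable_tnth.
set D := \int[f]_u (w u)%:E; set N := \int[f]_u (tnth u i * w u)%:E.
have [D0|D0] := eqVneq (fine D) 0%R; first by rewrite D0 invr0 mulr0 normr0.
have Dfin : D \is a fin_num by move: D0; case: (D) => //=; rewrite eqxx.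
have Dpos : (0 < fine D)%R.
  by rewrite lt_neqAle eq_sym D0 fine_ge0// integral_ge0// => v _; rewrite lee_fin expR_ge0.
rewrite normrM normfV (gtr0_norm Dpos) ler_pdivrMr//.
have [Nfin|] := boolP (N \is a fin_num); last first.
  by case: (N) => //= _; rewrite normr0 mulr_ge0// ltW.
have NB : `|N| <= B%:E * D.
  apply: le_trans (le_abse_integral _ measurableT (proj2 (measurable_EFinP _ _) mwi)) _.
  have wE : measurable_fun setT (fun v => (w v)%:E) by exact/measurable_EFinP.
  rewrite -ge0_integralZl_EFin// => [|v _]; last by rewrite lee_fin expR_ge0.
  apply: ae_ge0_le_integral => //.
  - by apply: measurableT_comp => //; exact/measurable_EFinP.
  - by move=> v _; rewrite -EFinM lee_fin mulr_ge0 ?expR_ge0.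
  - by apply/measurable_EFinP/measurable_funM => //; exact: measurable_cst.
  exists (~` U); split => //; first exact: measurableC.
  move=> v /= vle Uv; apply: vle => _.
  rewrite -EFinM lee_fin normrM (ger0_norm (expR_ge0 _)).
  by rewrite /w ler_pM2r ?expR_gt0 ?UB.
by move: NB; rewrite -(fineK Nfin) -(fineK Dfin) -EFinM lee_fin mulrC.
Qed.

End Integration.

Section Support.
Context {R : realType}.
Implicit Types (n : nat) (e r : R).

Definition ratr_tuple n (q : n.-tuple rat) : n.-tuple R := [tuple ratr (tnth q i) | i < n].

Lemma rational_eball_between n (p : n.-tuple R) e : 0 < e ->
  exists (q : n.-tuple rat) (rho : rat), 0 < ratr rho :> R /\
    eball (ratr_tuple q) (ratr rho) p /\ eball (ratr_tuple q) (ratr rho) `<=` eball p e.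
Proof.
move=> e0; have [c c0 near_p] := @vnorm2_lt_coord R n (e / 4) ltac:(lra).
have [qf qfp] := fin_all_exists (fun i : 'I_n =>
  @rat_in_itvoo R (tnth p i - c) (tnth p i + c) ltac:(lra)).
have [rho] := @rat_in_itvoo R (e / 4) (e / 2) ltac:(lra).
rewrite in_itv /= => /andP[e4 e2].
set q := ratr_tuple [tuple qf i | i < n].
have qp : vnorm2 (vsub q p) < (e / 4) ^+ 2.
  apply: near_p => i; rewrite tnth_vsub !tnth_mktuple.
  by move: (qfp i); rewrite in_itv ler_norml /= => /andP[? ?]; apply/andP; split; lra.
have rho0 : 0 < ratr rho :> R by lra.
exists [tuple qf i | i < n], rho; split=> //; split.
  apply/(eballE _ _ rho0); rewrite vnorm2_subC; apply: lt_trans qp _.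
  by rewrite ltr_pXn2r// nnegrE; lra.
apply: eball_sub => //; have := vnorm2_ge0 (vsub q p); nra.
Qed.

Lemma measure_supp_null n (mu : measure (n.-tuple R) R) (A : set (n.-tuple R)) :
  measurable A -> A `<=` ~` supp mu -> mu A = 0%E.
Proof.
move=> mA Asupp.
pose ball_of (qr : n.-tuple rat * rat) := eball (ratr_tuple qr.1) (ratr qr.2).
pose E k : set (n.-tuple R) := if unpickle k is Some qr then
  if (0 < ratr qr.2 :> R) && (mu (ball_of qr) == 0%E) then ball_of qr else set0
  else set0.
have mE k : measurable (E k).
  rewrite /E; case: (unpickle k) => [qr|//]; case: ifP => // /andP[qr0 _].
  exact: measurable_eball.
have muE k : mu (E k) = 0%E.
  rewrite /E; case: (unpickle k) => [qr|]; last exact: measure0.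
  by case: ifP => [/andP[_ /eqP]//|_]; exact: measure0.
have AE : A `<=` \bigcup_k E k.
  move=> p /Asupp /existsNP[e /not_implyP[e0 /negP]].
  rewrite lt0e measure_ge0 andbT negbK => /eqP mue.
  have [q [rho [rho0 [pq qp]]]] := rational_eball_between p e0.
  exists (pickle (q, rho)) => //; rewrite /E pickleK rho0 /=.
  have -> : mu (ball_of (q, rho)) == 0%E.
    rewrite eq_le measure_ge0 andbT -mue le_measure// inE; exact: measurable_eball.
  exact: pq.
apply/eqP; rewrite eq_le measure_ge0 andbT.
apply: le_trans (measure_sigma_subadditive _ mE mA AE) _.
by rewrite eseries0// => k _ _; exact: muE.
Qed.

Lemma box_finite_net n (a b : n.-tuple R) c :
  (forall i, tnth a i < tnth b i) -> 0 < c ->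
  exists s : seq (n.-tuple R), (forall p, p \in s -> box a b p) /\
    forall u, box a b u -> exists2 p, p \in s & forall i, `|tnth (vsub p u) i| <= c.
Proof.
move=> ab c0; pose W := \sum_(i < n) (tnth b i - tnth a i).
have leW i : tnth b i - tnth a i <= W.
  rewrite /W (bigD1 i)//= lerDl; apply: sumr_ge0 => j _; rewrite subr_ge0 ltW//.
pose N := (Num.truncn (W / c)).+1.
have N0 : 0 < N%:R :> R by rewrite ltr0n.
pose h i := (tnth b i - tnth a i) / N%:R.
have h0 i : 0 < h i by rewrite divr_gt0// subr_gt0.
have hc i : h i <= c.
  rewrite ler_pdivrMr//; apply: le_trans (leW i) _.
  by have := truncnS_gt (W / c); rewrite ltr_pdivrMr// mulrC => /ltW.
pose g (phi : {ffun 'I_n -> 'I_N.+1}) : n.-tuple R :=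
  [tuple tnth a i + (phi i)%:R * h i | i < n].
exists [seq g phi | phi <- enum {ffun 'I_n -> 'I_N.+1}]; split.
  move=> _ /mapP[phi _ ->] i; rewrite tnth_mktuple; apply/andP; split.
    by rewrite lerDl mulr_ge0 ?ler0n ?ltW.
  rewrite -lerBrDl /h mulrA ler_pdivrMr// mulrC ler_pM2l ?subr_gt0//.
  by rewrite ler_nat -ltnS.
move=> u uab; have ua i : 0 <= (tnth u i - tnth a i) / h i.
  by apply: divr_ge0; [rewrite subr_ge0; case/andP: (uab i) | exact: ltW].
pose j i := Num.truncn ((tnth u i - tnth a i) / h i).
have jN i : (j i < N.+1)%N.
  rewrite ltnS truncn_le_nat (@le_lt_trans _ _ N%:R) ?ltr_nat//.
  rewrite ler_pdivrMr// /h mulrC divfK ?gt_eqF// lerD2r.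
  by case/andP: (uab i).
exists (g [ffun i => inord (j i)]); first by apply: map_f; rewrite mem_enum.
move=> i; rewrite tnth_vsub tnth_mktuple ffunE inordK//.
have /andP[] := truncn_itv (ua i); rewrite -/(j i).
rewrite ler_pdivlMr// ltr_pdivrMr// -natr1 => lo hi.
by rewrite ler_norml; apply/andP; split; have := hc i; nra.
Qed.

Lemma box_eball_lb n (a b : n.-tuple R) (f : probability (n.-tuple R) R) r :
  (forall i, tnth a i < tnth b i) -> box a b `<=` supp f -> 0 < r ->
  exists2 delta, 0 < delta & forall u, box a b u -> (delta%:E <= f (eball u r))%E.
Proof.
move=> ab sab r0; have r2 : 0 < r / 2 by rewrite divr_gt0.
have [c c0 near_p] := @vnorm2_lt_coord R n (r / 2) r2.
have [s [sab' snet]] := box_finite_net ab c0.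
have fin p : f (eball p (r / 2)) \is a fin_num.
  by rewrite ge0_fin_numE// (le_lt_trans (probability_le1 _ _)) ?ltry//; exact: measurable_eball.
pose mass p := fine (f (eball p (r / 2))).
exists (\big[Num.min/1]_(p <- s) mass p).
  rewrite big_seq_cond; apply: lt_bigmin => // p /andP[/sab' /sab ps _].
  by apply/fine_gt0/andP; split; [exact: ps | rewrite -ge0_fin_numE ?fin].
move=> u /snet[p ps pu].
apply: (@le_trans _ _ (f (eball p (r / 2)))).
  by rewrite -(fineK (fin p)) lee_fin; exact: ge_bigmin_seq.
apply: le_measure; rewrite ?inE; try exact: measurable_eball.
by apply: eball_sub => //; have := near_p _ pu; nra.
Qed.

End Support.

Section CBOStep.
Context {R : realType}.
Local Open Scope ereal_scope.

Lemma cbo_step_eball_lb d (a b : d.-tuple R) (sigma tau r : R) :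
  (forall i, (tnth a i <= tnth b i)%R) -> (0 < sigma)%R -> (0 < tau)%R -> (0 < r)%R ->
  exists2 c0 : R, (0 < c0)%R & forall (lambda : R) (G : probability (d.-tuple R) R)
      (mc u ustar : d.-tuple R),
    (0 <= lambda * tau <= 1)%R -> std_gaussian G ->
    (forall i, `|tnth mc i| <= box_radius a b)%R -> box a b u -> box a b ustar ->
    c0%:E <= \int[G]_th
      (\1_(eball ustar r) (cbo_step (box a b) lambda tau sigma mc u th))%:E.
Proof.
move=> ab sigma0 tau0 r0; set B := box_radius a b; set s := (sigma * Num.sqrt tau)%R.
have s0 : (0 < s)%R by rewrite mulr_gt0// sqrtr_gt0.
have B0 : (0 <= B)%R by apply: sumr_ge0 => i _; exact: addr_ge0.
have [eps eps0 near_ustar] := @vnorm2_lt_coord R d r r0.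
have [beta beta0 Nlb] := @normal_prob_itv_lb R (2 * B / s) (eps / s)
  ltac:(by rewrite divr_ge0 ?mulr_ge0// ltW) ltac:(by rewrite divr_gt0).
exists (beta ^+ d)%R => [|lambda G mc u ustar /andP[lt0 lt1] Gstd mcB uab usab].
  exact: exprn_gt0.
(* [ctr] is where the noise has to land; it is bounded by 2B/s because the
   drifted point [c i] is a convex combination of points of [-B, B]. *)
pose c i := (tnth u i + lambda * tau * (tnth mc i - tnth u i))%R.
pose ctr i := ((tnth ustar i - c i) / s)%R.
pose A i := `](ctr i - eps / s)%R, (ctr i + eps / s)%R[%classic.
pose P := [set th : d.-tuple R | forall i, A i (tnth th i)].
have mP : measurable P by apply: measurable_coord_set => i; exact: measurable_itv.
have GP : (beta ^+ d)%:E <= G P.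
  rewrite Gstd => [|i]; last exact: measurable_itv.
  apply: lee_expr_prod => [|i]; first exact: ltW.
  apply: Nlb; rewrite /ctr normrM normfV (gtr0_norm s0) ler_pM2r ?invr_gt0//.
  have := box_coord_le i uab; have := box_coord_le i usab; have := mcB i.
  rewrite /c !ler_norml -/B => /andP[? ?] /andP[? ?] /andP[? ?].
  by apply/andP; split; nra.
apply: le_trans GP _.
have -> : G P = \int[G]_th (\1_P th)%:E by rewrite integral_indic// setIT.
apply: ge0_le_integral_nonmeas => th _; rewrite lee_fin !indicE ?ler0n//.
have [/set_mem thP|] := boolP (th \in P); last by rewrite ler0n.
rewrite mem_set//; apply/(eballE _ _ r0)/near_ustar => i; rewrite tnth_vsub.
apply: le_trans (projU_box_dist_le _ usab i) _.
rewrite !tnth_vadd !tnth_vscale tnth_vsub.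
have -> : (tnth u i + lambda * tau * (tnth mc i - tnth u i) + s * tnth th i - tnth ustar i
    = s * (tnth th i - ctr i))%R by rewrite /ctr /c; field; rewrite gt_eqF.
move: (thP i); rewrite /A /= in_itv /= => /andP[lo hi].
rewrite normrM (gtr0_norm s0) -ler_pdivlMl// ler_norml.
by apply/andP; split; rewrite mulrC; lra.
Qed.

End CBOStep.

Section Dynamics.
Context {R : realType} {d m : nat} (umin umax : d.-tuple R).
Variables (sigma tau lambda alpha nu dt : R) (kbar : nat).
Variables (Phis : m.-tuple R -> m.-tuple R) (Fc : 'M[R]_(m, d)) (xref : R -> m.-tuple R).
Variables (G f00 : probability (d.-tuple R) R) (x : nat -> m.-tuple R).
Variable f : nat -> nat -> probability (d.-tuple R) R.
Local Open Scope ereal_scope.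

Let L n := Lcost Phis Fc nu (x n) (xref ((n.+1)%:R * dt)%R).

Definition cbo_step_measure n k (A : set (d.-tuple R)) :=
  \int[f n k]_u \int[G]_th (\1_A (cbo_step (box umin umax) lambda tau sigma
    (consensus (L n) alpha (f n k)) u th))%:E.

Hypothesis f_init : forall A, f 0 0 A = f00 A.
Hypothesis f_step : forall n k, (k < kbar)%N -> forall A, measurable A ->
  f n k.+1 A = cbo_step_measure n k A.
Hypothesis f_restart : forall n A, f n.+1 0 A = f n kbar A.

Lemma cbo_measure_origin n k : (k <= kbar)%N ->
  (forall A, f n k A = f00 A) \/
  exists n' k', (k' < kbar)%N /\ forall A, measurable A -> f n k A = cbo_step_measure n' k' A.
Proof.
case: k => [_|k lt_k]; last by right; exists n, k; split=> //; exact: f_step.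
case: n => [|n]; first by left.
have [kbar0|kbar_gt0] := posnP kbar.
  by left; elim: n => [|n IH] A; rewrite f_restart kbar0.
right; exists n, kbar.-1; rewrite prednK//; split=> // A mA.
by rewrite f_restart -f_step ?prednK.
Qed.

Hypothesis box_ne : forall i, (tnth umin i <= tnth umax i)%R.

Lemma cbo_step_measure_box n k : cbo_step_measure n k (box umin umax) = 1.
Proof.
have int1 (P : probability (d.-tuple R) R) : \int[P]_u (cst 1 u) = 1.
  by rewrite integral_cst// mul1e; exact: probability_setT.
rewrite -[RHS](int1 (f n k)); apply: eq_integral => u _; rewrite -[RHS](int1 G).
apply: eq_integral => th _; rewrite indicE mem_set//= /cbo_step projU_box// => i.
by rewrite tnth_mktuple clamp_itv.
Qed.

Lemma cbo_measure_box n k : f00 (box umin umax) = 1 -> (k <= kbar)%N ->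
  f n k (box umin umax) = 1.
Proof.
move=> f00_box le_k.
case: (cbo_measure_origin n le_k) => [->//|[n' [k' [_ ->]]]].
  exact: cbo_step_measure_box.
exact: measurable_box.
Qed.

Lemma cbo_measure_eball_lb (r c0 delta0 : R) :
  f00 (box umin umax) = 1 ->
  (forall u, box umin umax u -> delta0%:E <= f00 (eball u r)) ->
  (forall mc u ustar, (forall i, `|tnth mc i| <= box_radius umin umax)%R ->
    box umin umax u -> box umin umax ustar ->
    c0%:E <= \int[G]_th (\1_(eball ustar r)
      (cbo_step (box umin umax) lambda tau sigma mc u th))%:E) ->
  (0 <= c0)%R -> (0 < r)%R ->
  forall n k, (k <= kbar)%N ->
  (Num.min c0 delta0)%:E <= f n k (eball (argmin_on (box umin umax) (L n)) r).
Proof.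
move=> f00_box f00_lb step_lb c0_ge0 r0 n k le_k.
have ustar_box : box umin umax (argmin_on (box umin umax) (L n)).
  by apply: argmin_on_box => //; exact: continuous_Lcost.
case: (cbo_measure_origin n le_k) => [->|[n' [k' [lt_k fE]]]].
  by apply: le_trans (f00_lb _ ustar_box); rewrite lee_fin ge_min lexx orbT.
rewrite fE; last exact: measurable_eball.
have f_box : f n' k' (box umin umax) = 1 by apply: cbo_measure_box => //; exact: ltnW.
have mcB i : (`|tnth (consensus (L n') alpha (f n' k')) i| <= box_radius umin umax)%R.
  apply: (@consensus_coord_le _ _ (box umin umax)) => //.
  - exact: measurable_box.
  - exact: measurable_Lcost.
  - by move=> u uab j; exact: box_coord_le.
apply: le_trans (integral_ge_full (measurable_box _ _) f_box c0_ge0 _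
  (fun u uab => step_lb _ _ _ mcB uab ustar_box)); first by rewrite lee_fin ge_min lexx.
by move=> u; apply: integral_ge0 => th _; rewrite lee_fin indicE ler0n.
Qed.

End Dynamics.

Theorem mainTheorem3 (R : realType) (d : nat) (umin umax : d.-tuple R)
  (sigma tau : R) (f00 : probability (d.-tuple R) R) (r : R) :
  (0 < d)%N ->
  (forall i, tnth umin i < tnth umax i) ->
  0 < sigma -> 0 < tau ->
  supp f00 = box umin umax ->
  0 < r ->
  exists delta : R, 0 < delta /\
  forall (m : nat) (X : set (m.-tuple R)) (Phis : m.-tuple R -> m.-tuple R)
    (Fc : 'M[R]_(m, d)) (nu dt : R) (xref : R -> m.-tuple R)
    (alpha lambda : R) (kbar : nat) (G : probability (d.-tuple R) R)
    (x : nat -> m.-tuple R) (f : nat -> nat -> probability (d.-tuple R) R),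
    (0 < m)%N ->
    (forall y, X y -> X (Phis y)) ->
    0 < nu ->
    \rank ((Fc^T *m Fc + nu%:M)%R) = d ->
    0 < dt ->
    (forall n : nat, X (xref (n%:R * dt))) ->
    0 < alpha -> 0 < lambda -> 0 < lambda * tau < 1 ->
    std_gaussian G ->
    X (x 0%N) ->
    (forall A, f 0%N 0%N A = f00 A) ->
    (forall n k, (k < kbar)%N -> forall A, measurable A ->
       f n k.+1 A =
       (\int[f n k]_u \int[G]_th
          (\1_A (cbo_step (box umin umax) lambda tau sigma
                   (consensus (Lcost Phis Fc nu (x n) (xref ((n.+1)%:R * dt)%R))
                      alpha (f n k)) u th))%:E)%E) ->
    (forall n, x n.+1 = vadd (Phis (x n))
        (mxv Fc (consensus (Lcost Phis Fc nu (x n) (xref ((n.+1)%:R * dt)%R))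
                   alpha (f n kbar)))) ->
    (forall n A, f n.+1 0%N A = f n kbar A) ->
    forall n k, (k <= kbar)%N ->
      (delta%:E <= f n k (eball (argmin_on (box umin umax)
                     (Lcost Phis Fc nu (x n) (xref ((n.+1)%:R * dt)%R))) r))%E.
Proof.
move=> _ ab sigma0 tau0 supp_f00 r0.
have ab' i : tnth umin i <= tnth umax i := ltW (ab i).
have mbox := measurable_box umin umax.
have f00_box : f00 (box umin umax) = 1%E.
  have /measure_supp_null f00_null : ~` box umin umax `<=` ~` supp f00 by rewrite supp_f00.
  have := probability_setC f00 (measurableC mbox).
  by rewrite setCK f00_null ?sube0//; exact: measurableC.
have [c0 c0_gt0 step_lb] := cbo_step_eball_lb ab' sigma0 tau0 r0.
have box_supp : box umin umax `<=` supp f00 by rewrite supp_f00.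
have [delta0 delta0_gt0 f00_lb] := box_eball_lb ab box_supp r0.
exists (Num.min c0 delta0); split; first by rewrite lt_min c0_gt0 delta0_gt0.
move=> m X Phis Fc nu dt xref alpha lambda kbar G x f _ _ _ _ _ _ _ _ /andP[lt0 lt1]
  Gstd _ f_init f_step _ f_restart.
apply: (cbo_measure_eball_lb f_init f_step f_restart ab' f00_box f00_lb _ (ltW c0_gt0) r0).
by move=> mc u ustar; apply: step_lb => //; rewrite !ltW.
Qed.
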